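(* Let $K\subseteq\mathbb{R}^d$ be compact. The following are equivalent: (a) $(\mathcal{J}^1(K),\|\cdot\|_{\mathcal{J}^1(K)})$ is a Banach space; (b) $(C^1(K),\|\cdot\|_{C^1(K)})$ is a Banach space; (c) for every $x\in K$ there is $C_x>0$ such that for all $f\in C^1(K)$ and all $y\in K\setminus\{x\}$, $\frac{|f(y)-f(x)|}{|y-x|}\le C_x\|f\|_{C^1(K)}$.
   Context: A continuous $df:K\to\mathbb{R}^d$ is a continuous derivative of $f:K\to\mathbb{R}$ on $K$ if $\lim_{y\to x,\,y\in K\setminus\{x\}}\frac{f(y)-f(x)-\langle df(x),y-x\rangle}{|y-x|}=0$ for all $x\in K$. $\mathcal{J}^1(K)=\{(f,df): df \text{ is a continuous derivative of } f \text{ on } K\}$ with norm $\|(f,df)\|_{\mathcal{J}^1(K)}=\|f\|_K+\|df\|_K$ ($\|\cdot\|_K$ the sup norm on $K$). $C^1(K)$ is the projection of $\mathcal{J}^1(K)$ onto the first coordinate, with the quotient norm $\|f\|_{C^1(K)}=\|f\|_K+\inf\{\|df\|_K: df \text{ a continuous derivative of } f\}$. *)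

From Stdlib Require Import Reals Lra List ClassicalEpsilon.
Open Scope R_scope.

Fixpoint rsum (n : nat) (f : nat -> R) : R :=
  match n with O => 0 | S m => rsum m f + f m end.

(* R^d, represented as real sequences vanishing from index d on *)
Definition Rd (d : nat) : Type := { x : nat -> R | forall i, (d <= i)%nat -> x i = 0 }.
Definition coord {d} (x : Rd d) (i : nat) : R := proj1_sig x i.

Definition vadd {d} (x y : Rd d) : Rd d.
Proof.
  exists (fun i => coord x i + coord y i). intros i Hi. unfold coord.
  rewrite (proj2_sig x i Hi), (proj2_sig y i Hi). ring.
Defined.
Definition vscal {d} (c : R) (x : Rd d) : Rd d.
Proof.
  exists (fun i => c * coord x i). intros i Hi. unfold coord.
  rewrite (proj2_sig x i Hi). ring.
Defined.
Definition vzero {d} : Rd d.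
Proof. exists (fun _ => 0). intros; reflexivity. Defined.
Definition vsub {d} (x y : Rd d) : Rd d := vadd x (vscal (-1) y).
Definition vdot {d} (x y : Rd d) : R := rsum d (fun i => coord x i * coord y i).
Definition vnorm {d} (x : Rd d) : R := sqrt (vdot x x).

Definition open_set {d} (U : Rd d -> Prop) : Prop :=
  forall x, U x -> exists e, e > 0 /\ forall y, vnorm (vsub y x) < e -> U y.
Definition compact_Rd {d} (K : Rd d -> Prop) : Prop :=
  forall (I : Type) (U : I -> Rd d -> Prop),
    (forall i, open_set (U i)) -> (forall x, K x -> exists i, U i x) ->
    exists l : list I, forall x, K x -> exists i, In i l /\ U i x.

Definition KT {d} (K : Rd d -> Prop) : Type := { x : Rd d | K x }.
Definition pt {d} {K : Rd d -> Prop} (x : KT K) : Rd d := proj1_sig x.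

(* supremum / infimum of a set of reals (meaningful when bounded & nonempty) *)
Definition sup_R (E : R -> Prop) : R := epsilon (inhabits 0) (fun s => is_lub E s).
Definition inf_R (E : R -> Prop) : R := - sup_R (fun r => E (- r)).

(* sup norms on K (0 if K is empty) *)
Definition supnorm {d} {K : Rd d -> Prop} (g : KT K -> R) : R :=
  sup_R (fun r => r = 0 \/ exists x, r = Rabs (g x)).
Definition supnormv {d} {K : Rd d -> Prop} (g : KT K -> Rd d) : R :=
  sup_R (fun r => r = 0 \/ exists x, r = vnorm (g x)).

Definition cont_on_v {d} {K : Rd d -> Prop} (g : KT K -> Rd d) : Prop :=
  forall (x : KT K) eps, eps > 0 -> exists delta, delta > 0 /\
    forall y : KT K, vnorm (vsub (pt y) (pt x)) < delta ->
      vnorm (vsub (g y) (g x)) < eps.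

Definition is_cont_deriv {d} {K : Rd d -> Prop} (f : KT K -> R) (df : KT K -> Rd d) : Prop :=
  cont_on_v df /\
  forall (x : KT K) eps, eps > 0 -> exists delta, delta > 0 /\
    forall y : KT K, pt y <> pt x -> vnorm (vsub (pt y) (pt x)) < delta ->
      Rabs (f y - f x - vdot (df x) (vsub (pt y) (pt x))) / vnorm (vsub (pt y) (pt x)) < eps.

Definition BanachSpace {V : Type} (S : V -> Prop) (zero : V) (add : V -> V -> V)
    (scal : R -> V -> V) (N : V -> R) : Prop :=
  (S zero /\ (forall u v, S u -> S v -> S (add u v)) /\ (forall c u, S u -> S (scal c u))) /\
  (N zero = 0 /\ (forall u, S u -> 0 <= N u) /\ (forall u, S u -> N u = 0 -> u = zero) /\
   (forall c u, S u -> N (scal c u) = Rabs c * N u) /\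
   (forall u v, S u -> S v -> N (add u v) <= N u + N v)) /\
  (forall u : nat -> V, (forall n, S (u n)) ->
     (forall eps, eps > 0 -> exists M, forall n m, (M <= n)%nat -> (M <= m)%nat ->
        N (add (u n) (scal (-1) (u m))) < eps) ->
     exists v, S v /\ forall eps, eps > 0 -> exists M, forall n, (M <= n)%nat ->
        N (add (u n) (scal (-1) v)) < eps).

Definition J1 {d} (K : Rd d -> Prop) (p : (KT K -> R) * (KT K -> Rd d)) : Prop :=
  is_cont_deriv (fst p) (snd p).
Definition J1norm {d} (K : Rd d -> Prop) (p : (KT K -> R) * (KT K -> Rd d)) : R :=
  supnorm (fst p) + supnormv (snd p).
Definition J1_Banach {d} (K : Rd d -> Prop) : Prop :=
  BanachSpace (J1 K) (fun _ => 0, fun _ => vzero)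
    (fun p q => (fun x => fst p x + fst q x, fun x => vadd (snd p x) (snd q x)))
    (fun c p => (fun x => c * fst p x, fun x => vscal c (snd p x)))
    (J1norm K).

(* C^1(K) with the quotient norm *)
Definition C1 {d} (K : Rd d -> Prop) (f : KT K -> R) : Prop :=
  exists df, is_cont_deriv f df.
Definition C1norm {d} (K : Rd d -> Prop) (f : KT K -> R) : R :=
  supnorm f + inf_R (fun r => exists df, is_cont_deriv f df /\ r = supnormv df).
Definition C1_Banach {d} (K : Rd d -> Prop) : Prop :=
  BanachSpace (C1 K) (fun _ => 0) (fun f g x => f x + g x) (fun c f x => c * f x)
    (C1norm K).

Definition cond_c {d} (K : Rd d -> Prop) : Prop :=
  forall x : KT K, exists C, C > 0 /\
    forall f : KT K -> R, C1 K f -> forall y : KT K, pt y <> pt x ->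
      Rabs (f y - f x) / vnorm (vsub (pt y) (pt x)) <= C * C1norm K f.

(* (b) => (c): the difference quotients f |-> (f y - f x)/|y - x| at a fixed x are continuous
   linear functionals on C^1(K), and each f in C^1(K) has bounded difference quotients at x,
   so by the uniform boundedness principle (a gliding hump argument) they are uniformly
   bounded.
   (c) => (a): a Cauchy sequence (f_n, df_n) in J^1(K) converges uniformly to some (F, G); (c)
   bounds the increments of f_n - f_m at x by C_x |y - x| times their J^1 distance, which lets
   the first-order Taylor estimate of f_n at x pass to F with derivative G.
   (a) => (b): C^1(K) is the quotient of J^1(K) by {(0, df)}, and quotients of Banach spaces are
   Banach: a fast Cauchy subsequence in C^1(K) lifts to a Cauchy sequence in J^1(K). *)

From Stdlib Require Import Reals Lra Lia List ClassicalEpsilon Classical FunctionalExtensionality ProofIrrelevance.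
Open Scope R_scope.

(** * Finite sums and the Euclidean structure of [R^d] *)

Lemma rsum_ext n f g : (forall i, (i < n)%nat -> f i = g i) -> rsum n f = rsum n g.
Proof. induction n; simpl; intros H; auto. rewrite IHn, H; auto; intros; apply H; lia. Qed.

Lemma rsum_plus n f g : rsum n (fun i => f i + g i) = rsum n f + rsum n g.
Proof. induction n; simpl; [ring | rewrite IHn; ring]. Qed.

Lemma rsum_scal n c f : rsum n (fun i => c * f i) = c * rsum n f.
Proof. induction n; simpl; [ring | rewrite IHn; ring]. Qed.

Lemma rsum_nonneg n f : (forall i, (i < n)%nat -> 0 <= f i) -> 0 <= rsum n f.
Proof.
  induction n; simpl; intros H; [lra|].
  assert (0 <= f n) by (apply H; lia).
  assert (0 <= rsum n f) by (apply IHn; intros; apply H; lia). lra.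
Qed.

Lemma rsum_ge_term n f i : (i < n)%nat -> (forall j, (j < n)%nat -> 0 <= f j) -> f i <= rsum n f.
Proof.
  induction n; simpl; intros Hi H; [lia|].
  assert (0 <= rsum n f) by (apply rsum_nonneg; intros; apply H; lia).
  assert (0 <= f n) by (apply H; lia).
  destruct (Nat.eq_dec i n) as [->|Hin]; [lra|].
  assert (f i <= rsum n f) by (apply IHn; [lia | intros; apply H; lia]). lra.
Qed.

Lemma rsum_cv n (a : nat -> nat -> R) (l : nat -> R) :
  (forall i, (i < n)%nat -> Un_cv (fun m => a m i) (l i)) ->
  Un_cv (fun m => rsum n (a m)) (rsum n l).
Proof.
  induction n; simpl; intros H.
  - intros eps Heps. exists 0%nat. intros. unfold Rdist. rewrite Rminus_diag, Rabs_R0; auto.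
  - apply CV_plus; [apply IHn; intros; apply H; lia | apply H; lia].
Qed.

Lemma rsum_cauchy_schwarz n u v :
  rsum n (fun i => u i * v i) * rsum n (fun i => u i * v i) <=
  rsum n (fun i => u i * u i) * rsum n (fun i => v i * v i).
Proof.
  set (a := rsum n (fun i => u i * u i)). set (b := rsum n (fun i => v i * v i)).
  set (c := rsum n (fun i => u i * v i)).
  assert (Q : forall t, 0 <= a + 2 * t * c + t * t * b).
  { intro t. replace (a + 2 * t * c + t * t * b)
      with (rsum n (fun i => (u i + t * v i) * (u i + t * v i))).
    - apply rsum_nonneg. intros. apply Rle_0_sqr.
    - unfold a, b, c. clear. induction n; simpl; [ring | rewrite IHn; ring]. }
  assert (0 <= b) by (apply rsum_nonneg; intros; apply Rle_0_sqr).
  destruct (Req_dec b 0) as [Hb0|Hb0].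
  - destruct (Req_dec c 0) as [Hc|Hc]; [rewrite Hc, Hb0; lra|].
    exfalso. specialize (Q (- (a + 1) / (2 * c))). rewrite Hb0 in Q.
    replace (2 * (- (a + 1) / (2 * c)) * c) with (- (a + 1)) in Q by (field; auto). lra.
  - specialize (Q (- c / b)).
    replace (a + 2 * (- c / b) * c + - c / b * (- c / b) * b) with (a - c * c / b) in Q
      by (field; auto).
    assert (c * c / b * b <= a * b) by (apply Rmult_le_compat_r; lra).
    replace (c * c / b * b) with (c * c) in H0 by (field; auto). lra.
Qed.

Lemma vec_ext {d} (x y : Rd d) : (forall i, (i < d)%nat -> coord x i = coord y i) -> x = y.
Proof.
  destruct x as [x Hx], y as [y Hy]. unfold coord; simpl. intros H.
  assert (x = y) as <-.
  { apply functional_extensionality; intro i.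
    destruct (Nat.lt_ge_cases i d); auto. rewrite Hx, Hy; auto. }
  f_equal. apply proof_irrelevance.
Qed.

Ltac vec_ring := apply vec_ext; intros; cbn; ring.

Lemma coord_out {d} (x : Rd d) i : (d <= i)%nat -> coord x i = 0.
Proof. apply (proj2_sig x). Qed.

Lemma vdot_comm {d} (x y : Rd d) : vdot x y = vdot y x.
Proof. apply rsum_ext; intros; ring. Qed.

Lemma vdot_add_l {d} (x y w : Rd d) : vdot (vadd x y) w = vdot x w + vdot y w.
Proof. unfold vdot. rewrite <- rsum_plus. apply rsum_ext; intros; cbn; ring. Qed.

Lemma vdot_scal_l {d} c (x w : Rd d) : vdot (vscal c x) w = c * vdot x w.
Proof. unfold vdot. rewrite <- rsum_scal. apply rsum_ext; intros; cbn; ring. Qed.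

Lemma vdot_sub_l {d} (x y w : Rd d) : vdot (vsub x y) w = vdot x w - vdot y w.
Proof. unfold vsub. rewrite vdot_add_l, vdot_scal_l. ring. Qed.

Lemma vdot_zero_l {d} (w : Rd d) : vdot vzero w = 0.
Proof.
  replace (@vzero d) with (vscal 0 w) by vec_ring. rewrite vdot_scal_l. ring.
Qed.

Lemma vdot_self_nonneg {d} (x : Rd d) : 0 <= vdot x x.
Proof. apply rsum_nonneg; intros; apply Rle_0_sqr. Qed.

Lemma vnorm_nonneg {d} (x : Rd d) : 0 <= vnorm x.
Proof. apply sqrt_pos. Qed.

Lemma vnorm_sq {d} (x : Rd d) : vnorm x * vnorm x = vdot x x.
Proof. apply sqrt_sqrt, vdot_self_nonneg. Qed.

Lemma vdot_cauchy_schwarz {d} (x y : Rd d) : Rabs (vdot x y) <= vnorm x * vnorm y.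
Proof.
  pose proof (rsum_cauchy_schwarz d (coord x) (coord y)) as H.
  change (vdot x y * vdot x y <= vdot x x * vdot y y) in H.
  rewrite <- !vnorm_sq in H.
  pose proof (vnorm_nonneg x); pose proof (vnorm_nonneg y).
  rewrite <- (Rabs_pos_eq (vnorm x * vnorm y)) by nra.
  apply Rsqr_le_abs_0. unfold Rsqr. nra.
Qed.

Lemma vnorm_add_le {d} (x y : Rd d) : vnorm (vadd x y) <= vnorm x + vnorm y.
Proof.
  pose proof (vnorm_nonneg x); pose proof (vnorm_nonneg y); pose proof (vnorm_nonneg (vadd x y)).
  assert (E : vdot (vadd x y) (vadd x y) = vdot x x + 2 * vdot x y + vdot y y).
  { rewrite vdot_add_l, !(vdot_comm _ (vadd x y)), !vdot_add_l, (vdot_comm y x). ring. }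
  pose proof (vdot_cauchy_schwarz x y).
  pose proof (Rle_abs (vdot x y)).
  rewrite <- !vnorm_sq in E. nra.
Qed.

Lemma vnorm_scal {d} c (x : Rd d) : vnorm (vscal c x) = Rabs c * vnorm x.
Proof.
  unfold vnorm. rewrite <- sqrt_Rsqr_abs, <- sqrt_mult_alt by apply Rle_0_sqr. f_equal.
  rewrite vdot_scal_l, vdot_comm, vdot_scal_l. unfold Rsqr. ring.
Qed.

Lemma vnorm_zero {d} : vnorm (@vzero d) = 0.
Proof. replace (@vzero d) with (vscal 0 (@vzero d)) by vec_ring.
  rewrite vnorm_scal, Rabs_R0. ring. Qed.

Lemma vnorm_eq0 {d} (x : Rd d) : vnorm x = 0 -> x = vzero.
Proof.
  intros H. assert (Hx : vdot x x = 0) by (rewrite <- vnorm_sq, H; ring).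
  apply vec_ext; intros i Hi.
  pose proof (rsum_ge_term d (fun i => coord x i * coord x i) i Hi) as Hle.
  assert (coord x i * coord x i <= 0).
  { fold (vdot x x) in Hle; rewrite Hx in Hle. apply Hle. intros; apply Rle_0_sqr. }
  cbn [coord vzero proj1_sig]. nra.
Qed.

Lemma coord_le_vnorm {d} (x : Rd d) i : Rabs (coord x i) <= vnorm x.
Proof.
  destruct (Nat.lt_ge_cases i d).
  - rewrite <- sqrt_Rsqr_abs. apply sqrt_le_1_alt. unfold Rsqr.
    apply (rsum_ge_term d (fun i => coord x i * coord x i)); auto. intros; apply Rle_0_sqr.
  - rewrite coord_out, Rabs_R0 by auto. apply vnorm_nonneg.
Qed.

Lemma vdist_self {d} (x : Rd d) : vnorm (vsub x x) = 0.
Proof. replace (vsub x x) with (@vzero d) by vec_ring. apply vnorm_zero. Qed.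

Lemma vdist_pos {d} (x y : Rd d) : x <> y -> 0 < vnorm (vsub x y).
Proof.
  intros Hxy. destruct (vnorm_nonneg (vsub x y)) as [|E]; auto.
  exfalso; apply Hxy. apply vec_ext; intros i _.
  pose proof (f_equal (fun v => coord v i) (vnorm_eq0 _ (eq_sym E))) as Hi.
  cbn [coord vsub vadd vscal vzero proj1_sig] in Hi. lra.
Qed.

Lemma vdist_triangle {d} (x y z : Rd d) : vnorm (vsub x z) <= vnorm (vsub x y) + vnorm (vsub y z).
Proof. replace (vsub x z) with (vadd (vsub x y) (vsub y z)) by vec_ring. apply vnorm_add_le. Qed.

Lemma vdist_sym {d} (x y : Rd d) : vnorm (vsub x y) = vnorm (vsub y x).
Proof.
  replace (vsub x y) with (vscal (-1) (vsub y x)) by vec_ring.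
  rewrite vnorm_scal, Rabs_left by lra. ring.
Qed.

Lemma vnorm_sub_ge {d} (x y : Rd d) : Rabs (vnorm x - vnorm y) <= vnorm (vsub x y).
Proof.
  assert (vnorm x <= vnorm (vsub x y) + vnorm y).
  { replace x with (vadd (vsub x y) y) at 1 by vec_ring. apply vnorm_add_le. }
  assert (vnorm y <= vnorm (vsub y x) + vnorm x).
  { replace y with (vadd (vsub y x) x) at 1 by vec_ring. apply vnorm_add_le. }
  rewrite vdist_sym in H0. apply Rabs_le; lra.
Qed.

Lemma sup_R_lub (E : R -> Prop) : bound E -> (exists x, E x) -> is_lub E (sup_R E).
Proof. intros Hb Hne. unfold sup_R. apply epsilon_spec. destruct (completeness E Hb Hne) as [m Hm]; eauto. Qed.

Definition sup0 {X} (h : X -> R) : R := sup_R (fun r => r = 0 \/ exists x, r = h x).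

Section Sup0.
Variables (X : Type) (h : X -> R) (B : R).
Hypothesis h_le : forall x, h x <= B.

Lemma sup0_lub : is_lub (fun r => r = 0 \/ exists x, r = h x) (sup0 h).
Proof.
  apply sup_R_lub.
  - exists (Rmax B 0). intros r [->|[x ->]]; [apply Rmax_r|].
    eapply Rle_trans; [apply h_le | apply Rmax_l].
  - exists 0; auto.
Qed.

Lemma sup0_ge x : h x <= sup0 h.
Proof. apply sup0_lub. right; eauto. Qed.

Lemma sup0_nonneg : 0 <= sup0 h.
Proof. apply sup0_lub. left; auto. Qed.

Lemma sup0_le : 0 <= B -> sup0 h <= B.
Proof. intros HB. apply sup0_lub. intros r [->|[x ->]]; auto. Qed.

End Sup0.

Lemma sup0_scal {X} (h : X -> R) B a : (forall x, h x <= B) -> 0 <= a ->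
  sup0 (fun x => a * h x) = a * sup0 h.
Proof.
  intros HB Ha. pose proof (sup0_nonneg X h B HB).
  assert (HaB : forall x, a * h x <= a * B) by (intros; apply Rmult_le_compat_l; auto).
  apply Rle_antisym.
  - apply (sup0_le X _ (a * sup0 h)); [|nra].
    intros; apply Rmult_le_compat_l; auto; eapply sup0_ge; eauto.
  - destruct (Req_dec a 0) as [->|Ha0].
    + rewrite Rmult_0_l. apply (sup0_nonneg X _ _ HaB).
    + assert (sup0 h <= sup0 (fun x => a * h x) / a).
      { apply (sup0_le X h).
        - intros x. apply (Rmult_le_reg_l a); [lra|]. field_simplify; auto.
          apply (sup0_ge X (fun x => a * h x) _ HaB).
        - pose proof (sup0_nonneg X _ _ HaB). unfold Rdiv.
          apply Rmult_le_pos; [lra | apply Rlt_le, Rinv_0_lt_compat; lra]. }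
      apply (Rmult_le_compat_l a) in H0; auto. field_simplify in H0; auto.
Qed.

Lemma inf_R_glb (E : R -> Prop) : (exists m, forall e, E e -> m <= e) -> (exists e, E e) ->
  (forall e, E e -> inf_R E <= e) /\ (forall m, (forall e, E e -> m <= e) -> m <= inf_R E).
Proof.
  intros [m0 Hm0] [e0 He0]. unfold inf_R.
  assert (L : is_lub (fun r => E (- r)) (sup_R (fun r => E (- r)))).
  { apply sup_R_lub.
    - exists (- m0). intros r Hr. specialize (Hm0 _ Hr). lra.
    - exists (- e0). rewrite Ropp_involutive; auto. }
  split.
  - intros e He. assert (- e <= sup_R (fun r => E (- r))); [|lra].
    apply L. rewrite Ropp_involutive; auto.
  - intros m Hm. assert (sup_R (fun r => E (- r)) <= - m); [|lra].
    apply L. intros r Hr. specialize (Hm _ Hr). lra.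
Qed.

Lemma inf_R_approx (E : R -> Prop) eps : (exists m, forall e, E e -> m <= e) -> (exists e, E e) ->
  eps > 0 -> exists e, E e /\ e < inf_R E + eps.
Proof.
  intros Hm Hne Heps. apply NNPP. intros Hno.
  assert (inf_R E + eps <= inf_R E); [|lra].
  apply (inf_R_glb E Hm Hne). intros e He. apply Rnot_lt_le. intros Hlt. apply Hno; eauto.
Qed.

Lemma KT_ext {d} {K : Rd d -> Prop} (x y : KT K) : pt x = pt y -> x = y.
Proof. destruct x, y; unfold pt; simpl; intros; subst; f_equal; apply proof_irrelevance. Qed.

Definition Kcont {d} {K : Rd d -> Prop} (g : KT K -> R) : Prop :=
  forall (x : KT K) eps, eps > 0 -> exists delta, delta > 0 /\
    forall y : KT K, vnorm (vsub (pt y) (pt x)) < delta -> Rabs (g y - g x) < eps.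

Lemma list_bounded {A} (h : A -> R) (l : list A) : exists B, forall a, In a l -> h a <= B.
Proof.
  induction l as [|a l [B HB]]; [exists 0; intros ? []|].
  exists (Rmax (h a) B). intros b [->|Hb]; [apply Rmax_l|].
  eapply Rle_trans; [apply HB; auto | apply Rmax_r].
Qed.

Lemma compact_cont_bounded {d} {K : Rd d -> Prop} (HK : compact_Rd K) (g : KT K -> R) :
  Kcont g -> exists B, forall x, Rabs (g x) <= B.
Proof.
  intros Hc.
  destruct (HK (KT K) (fun x z => exists delta, delta > 0 /\
       (forall y : KT K, vnorm (vsub (pt y) (pt x)) < delta -> Rabs (g y - g x) < 1) /\
       vnorm (vsub z (pt x)) < delta)) as [l Hl].
  - intros x z [delta [Hd [H1 H2]]]. exists (delta - vnorm (vsub z (pt x))). split; [lra|].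
    intros w Hw. exists delta; repeat split; auto.
    pose proof (vdist_triangle w z (pt x)). lra.
  - intros z Kz. exists (exist _ z Kz).
    destruct (Hc (exist _ z Kz) 1) as [delta [Hd H]]; [lra|].
    exists delta; repeat split; auto. unfold pt; simpl. rewrite vdist_self; auto.
  - destruct (list_bounded (fun i => Rabs (g i) + 1) l) as [B HB]. exists B. intros x.
    destruct (Hl (pt x) (proj2_sig x)) as [i [Hi [delta [Hd [H1 H2]]]]].
    specialize (H1 x H2). specialize (HB i Hi).
    pose proof (Rabs_triang_inv (g x) (g i)). lra.
Qed.

(** * Continuous derivatives on [K] *)

Lemma Rdiv_lt_iff a v e : v > 0 -> (a / v < e <-> a < e * v).
Proof.
  intros Hv. unfold Rdiv. split; intros H.
  - apply (Rmult_lt_compat_r v) in H; auto. rewrite Rmult_assoc, Rinv_l, Rmult_1_r in H; lra.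
  - apply (Rmult_lt_reg_r v); auto. rewrite Rmult_assoc, Rinv_l, Rmult_1_r; lra.
Qed.

Lemma Rdiv_le_iff a v e : v > 0 -> (a / v <= e <-> a <= e * v).
Proof.
  intros Hv. unfold Rdiv. split; intros H.
  - apply (Rmult_le_compat_r v) in H; [|lra]. rewrite Rmult_assoc, Rinv_l, Rmult_1_r in H; lra.
  - apply (Rmult_le_reg_r v); auto. rewrite Rmult_assoc, Rinv_l, Rmult_1_r; lra.
Qed.

Lemma Rabs_div_pos a v : v > 0 -> Rabs (a / v) = Rabs a / v.
Proof. intros Hv. unfold Rdiv. rewrite Rabs_mult, Rabs_inv, (Rabs_pos_eq v); lra. Qed.

Lemma Rabs_triang3 a b c : Rabs (a - b + c) <= Rabs a + Rabs b + Rabs c.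
Proof.
  pose proof (Rabs_triang (a - b) c). pose proof (Rabs_triang a (- b)).
  rewrite Rabs_Ropp in H0. unfold Rminus in *. lra.
Qed.

Definition vd {d} {K : Rd d -> Prop} (x y : KT K) : R := vnorm (vsub (pt y) (pt x)).

Lemma vd_pos {d} {K : Rd d -> Prop} (x y : KT K) : pt y <> pt x -> vd x y > 0.
Proof. apply vdist_pos. Qed.

Section ContDeriv.
Context {d : nat} {K : Rd d -> Prop}.

Lemma cont_deriv_zero : is_cont_deriv (fun _ : KT K => 0) (fun _ => vzero).
Proof.
  split; intros x eps Heps; exists 1; split; try lra.
  - intros. rewrite vdist_self. lra.
  - intros y _ _. rewrite vdot_zero_l, Rminus_0_r, Rminus_0_r, Rabs_R0.
    unfold Rdiv; rewrite Rmult_0_l; lra.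
Qed.

Lemma cont_deriv_add (f g : KT K -> R) df dg : is_cont_deriv f df -> is_cont_deriv g dg ->
  is_cont_deriv (fun x => f x + g x) (fun x => vadd (df x) (dg x)).
Proof.
  intros [Cf Rf] [Cg Rg]. split; intros x eps Heps.
  - destruct (Cf x (eps/2)) as [d1 [Hd1 H1]]; [lra|].
    destruct (Cg x (eps/2)) as [d2 [Hd2 H2]]; [lra|].
    exists (Rmin d1 d2); split; [apply Rmin_pos; auto|]. intros y Hy.
    specialize (H1 y (Rlt_le_trans _ _ _ Hy (Rmin_l _ _))).
    specialize (H2 y (Rlt_le_trans _ _ _ Hy (Rmin_r _ _))).
    replace (vsub (vadd (df y) (dg y)) (vadd (df x) (dg x)))
      with (vadd (vsub (df y) (df x)) (vsub (dg y) (dg x))) by vec_ring.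
    pose proof (vnorm_add_le (vsub (df y) (df x)) (vsub (dg y) (dg x))). lra.
  - destruct (Rf x (eps/2)) as [d1 [Hd1 H1]]; [lra|].
    destruct (Rg x (eps/2)) as [d2 [Hd2 H2]]; [lra|].
    exists (Rmin d1 d2); split; [apply Rmin_pos; auto|]. intros y E Hy.
    assert (Hv : vnorm (vsub (pt y) (pt x)) > 0) by (apply vdist_pos; auto).
    specialize (H1 y E (Rlt_le_trans _ _ _ Hy (Rmin_l _ _))).
    specialize (H2 y E (Rlt_le_trans _ _ _ Hy (Rmin_r _ _))).
    rewrite Rdiv_lt_iff in H1, H2 |- * by auto. rewrite vdot_add_l.
    set (h := vsub (pt y) (pt x)) in *.
    pose proof (Rabs_triang (f y - f x - vdot (df x) h) (g y - g x - vdot (dg x) h)).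
    replace (f y + g y - (f x + g x) - (vdot (df x) h + vdot (dg x) h))
      with (f y - f x - vdot (df x) h + (g y - g x - vdot (dg x) h)) by ring.
    lra.
Qed.

Lemma cont_deriv_scal (f : KT K -> R) df c : is_cont_deriv f df ->
  is_cont_deriv (fun x => c * f x) (fun x => vscal c (df x)).
Proof.
  intros [Cf Rf]. pose proof (Rabs_pos c).
  assert (Hc : forall eps, eps > 0 -> eps / (Rabs c + 1) > 0 /\ Rabs c * (eps / (Rabs c + 1)) < eps).
  { intros eps Heps. split; [apply Rdiv_lt_0_compat; lra|].
    apply (Rmult_lt_reg_r (Rabs c + 1)); [lra|]. field_simplify; lra. }
  split; intros x eps Heps; destruct (Hc eps Heps) as [He Hlt].
  - destruct (Cf x _ He) as [d1 [Hd1 H1]]. exists d1; split; auto. intros y Hy.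
    specialize (H1 y Hy).
    replace (vsub (vscal c (df y)) (vscal c (df x))) with (vscal c (vsub (df y) (df x))) by vec_ring.
    rewrite vnorm_scal.
    pose proof (Rmult_le_compat_l _ _ _ H (Rlt_le _ _ H1)). lra.
  - destruct (Rf x _ He) as [d1 [Hd1 H1]]. exists d1; split; auto. intros y E Hy.
    assert (Hv : vnorm (vsub (pt y) (pt x)) > 0) by (apply vdist_pos; auto).
    specialize (H1 y E Hy). rewrite Rdiv_lt_iff in H1 |- * by auto.
    rewrite vdot_scal_l.
    replace (c * f y - c * f x - c * vdot (df x) (vsub (pt y) (pt x)))
      with (c * (f y - f x - vdot (df x) (vsub (pt y) (pt x)))) by ring.
    rewrite Rabs_mult.
    pose proof (Rmult_le_compat_l _ _ _ H (Rlt_le _ _ H1)). nra.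
Qed.

Lemma cont_deriv_local_lipschitz (f : KT K -> R) df x : is_cont_deriv f df ->
  exists delta, delta > 0 /\ forall y, vd x y < delta -> Rabs (f y - f x) <= (vnorm (df x) + 1) * vd x y.
Proof.
  intros [_ Hr]. destruct (Hr x 1) as [delta [Hd H]]; [lra|]. exists delta; split; auto.
  intros y Hy. destruct (classic (pt y = pt x)) as [E|E].
  { rewrite (KT_ext y x E), Rminus_diag, Rabs_R0. unfold vd. rewrite vdist_self. lra. }
  assert (Hv : vd x y > 0) by (apply vd_pos; auto).
  specialize (H y E Hy). apply Rdiv_lt_iff in H; auto.
  pose proof (vdot_cauchy_schwarz (df x) (vsub (pt y) (pt x))).
  pose proof (Rabs_triang (f y - f x - vdot (df x) (vsub (pt y) (pt x))) (vdot (df x) (vsub (pt y) (pt x)))).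
  replace (f y - f x - vdot (df x) (vsub (pt y) (pt x)) + vdot (df x) (vsub (pt y) (pt x)))
    with (f y - f x) in H1 by ring.
  unfold vd in *. lra.
Qed.

Lemma cont_deriv_Kcont (f : KT K -> R) df : is_cont_deriv f df -> Kcont f.
Proof.
  intros H x eps Heps. destruct (cont_deriv_local_lipschitz f df x H) as [delta [Hd HL]].
  pose proof (vnorm_nonneg (df x)).
  exists (Rmin delta (eps / (vnorm (df x) + 2))). split.
  { apply Rmin_pos; auto. apply Rdiv_lt_0_compat; lra. }
  intros y Hy. fold (vd x y) in Hy.
  assert (vd x y * (vnorm (df x) + 2) < eps).
  { apply (Rlt_le_trans _ (eps / (vnorm (df x) + 2) * (vnorm (df x) + 2))); [|right; field; lra].
    apply Rmult_lt_compat_r; [lra|]. eapply Rlt_le_trans; [apply Hy | apply Rmin_r]. }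
  specialize (HL y (Rlt_le_trans _ _ _ Hy (Rmin_l _ _))).
  pose proof (vnorm_nonneg (vsub (pt y) (pt x))). unfold vd in *. nra.
Qed.

Lemma cont_on_v_norm (g : KT K -> Rd d) : cont_on_v g -> Kcont (fun x => vnorm (g x)).
Proof.
  intros Hg x eps Heps. destruct (Hg x eps Heps) as [delta [Hd H]].
  exists delta; split; auto. intros y Hy. eapply Rle_lt_trans; [apply vnorm_sub_ge | auto].
Qed.

Lemma cont_deriv_bounded (HK : compact_Rd K) (f : KT K -> R) df : is_cont_deriv f df ->
  (exists B, forall x, Rabs (f x) <= B) /\ (exists B, forall x, vnorm (df x) <= B).
Proof.
  intros H. split; [eapply compact_cont_bounded, cont_deriv_Kcont; eauto|].
  destruct (compact_cont_bounded HK _ (cont_on_v_norm df (proj1 H))) as [B HB].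
  exists B. intros x. rewrite <- (Rabs_pos_eq (vnorm (df x))) by apply vnorm_nonneg. auto.
Qed.

Lemma cont_deriv_quotient_bounded (HK : compact_Rd K) (f : KT K -> R) df x : is_cont_deriv f df ->
  exists B, forall y, Rabs (f y - f x) <= B * vd x y.
Proof.
  intros H. destruct (cont_deriv_bounded HK f df H) as [[Bf HBf] _].
  destruct (cont_deriv_local_lipschitz f df x H) as [delta [Hd HL]].
  assert (0 <= Bf) by (specialize (HBf x); pose proof (Rabs_pos (f x)); lra).
  exists (Rmax (vnorm (df x) + 1) (2 * Bf / delta)). intros y.
  pose proof (vnorm_nonneg (vsub (pt y) (pt x))). fold (vd x y) in H1.
  destruct (Rlt_dec (vd x y) delta) as [L|L].
  - eapply Rle_trans; [apply HL; auto|]. apply Rmult_le_compat_r; [lra | apply Rmax_l].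
  - apply Rnot_lt_le in L.
    assert (2 * Bf <= 2 * Bf / delta * vd x y).
    { replace (2 * Bf) with (2 * Bf / delta * delta) at 1 by (field; lra).
      apply Rmult_le_compat_l; auto. unfold Rdiv. apply Rmult_le_pos; [lra|].
      apply Rlt_le, Rinv_0_lt_compat; lra. }
    assert (2 * Bf / delta * vd x y <= Rmax (vnorm (df x) + 1) (2 * Bf / delta) * vd x y)
      by (apply Rmult_le_compat_r; [lra | apply Rmax_r]).
    pose proof (Rabs_triang (f y) (- f x)). rewrite Rabs_Ropp in H4.
    pose proof (HBf y). pose proof (HBf x). unfold Rminus. lra.
Qed.

End ContDeriv.

Definition normed_space {V : Type} (S : V -> Prop) (zero : V) (add : V -> V -> V)
    (scal : R -> V -> V) (N : V -> R) : Prop :=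
  (S zero /\ (forall u v, S u -> S v -> S (add u v)) /\ (forall c u, S u -> S (scal c u))) /\
  (N zero = 0 /\ (forall u, S u -> 0 <= N u) /\ (forall u, S u -> N u = 0 -> u = zero) /\
   (forall c u, S u -> N (scal c u) = Rabs c * N u) /\
   (forall u v, S u -> S v -> N (add u v) <= N u + N v)).

Definition complete_space {V : Type} (S : V -> Prop) (add : V -> V -> V)
    (scal : R -> V -> V) (N : V -> R) : Prop :=
  forall u : nat -> V, (forall n, S (u n)) ->
    (forall eps, eps > 0 -> exists M, forall n m, (M <= n)%nat -> (M <= m)%nat ->
       N (add (u n) (scal (-1) (u m))) < eps) ->
    exists v, S v /\ forall eps, eps > 0 -> exists M, forall n, (M <= n)%nat ->
       N (add (u n) (scal (-1) v)) < eps.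

Lemma BanachSpace_iff {V : Type} (S : V -> Prop) zero add scal N :
  normed_space S zero add scal N ->
  (BanachSpace S zero add scal N <-> complete_space S add scal N).
Proof. unfold BanachSpace, normed_space, complete_space. tauto. Qed.

Section Norms.
Context {d : nat} {K : Rd d -> Prop} (HK : compact_Rd K).

Lemma supnorm_ge (f : KT K -> R) df x : is_cont_deriv f df -> Rabs (f x) <= supnorm f.
Proof.
  intros H. destruct (cont_deriv_bounded HK f df H) as [[B HB] _].
  apply (sup0_ge _ (fun x => Rabs (f x)) B HB).
Qed.

Lemma supnorm_nonneg (f : KT K -> R) df : is_cont_deriv f df -> 0 <= supnorm f.
Proof.
  intros H. destruct (cont_deriv_bounded HK f df H) as [[B HB] _].
  apply (sup0_nonneg _ (fun x => Rabs (f x)) B HB).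
Qed.

Lemma supnormv_ge (f : KT K -> R) df x : is_cont_deriv f df -> vnorm (df x) <= supnormv df.
Proof.
  intros H. destruct (cont_deriv_bounded HK f df H) as [_ [B HB]].
  apply (sup0_ge _ (fun x => vnorm (df x)) B HB).
Qed.

Lemma supnormv_nonneg (f : KT K -> R) df : is_cont_deriv f df -> 0 <= supnormv df.
Proof.
  intros H. destruct (cont_deriv_bounded HK f df H) as [_ [B HB]].
  apply (sup0_nonneg _ (fun x => vnorm (df x)) B HB).
Qed.

Lemma supnorm_le (f : KT K -> R) B : 0 <= B -> (forall x, Rabs (f x) <= B) -> supnorm f <= B.
Proof. intros HB H. apply (sup0_le _ (fun x => Rabs (f x)) B H HB). Qed.

Lemma supnormv_le (g : KT K -> Rd d) B : 0 <= B -> (forall x, vnorm (g x) <= B) -> supnormv g <= B.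
Proof. intros HB H. apply (sup0_le _ (fun x => vnorm (g x)) B H HB). Qed.

Lemma supnorm_scal (f : KT K -> R) df c : is_cont_deriv f df ->
  supnorm (fun x => c * f x) = Rabs c * supnorm f /\
  supnormv (fun x => vscal c (df x)) = Rabs c * supnormv df.
Proof.
  intros H. destruct (cont_deriv_bounded HK f df H) as [[B1 H1] [B2 H2]].
  split.
  - rewrite <- (sup0_scal (fun x => Rabs (f x)) B1) by (auto; apply Rabs_pos).
    change (sup0 (fun x => Rabs (c * f x)) = sup0 (fun x => Rabs c * Rabs (f x))).
    f_equal. apply functional_extensionality; intros x. apply Rabs_mult.
  - rewrite <- (sup0_scal (fun x => vnorm (df x)) B2) by (auto; apply Rabs_pos).
    change (sup0 (fun x => vnorm (vscal c (df x))) = sup0 (fun x => Rabs c * vnorm (df x))).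
    f_equal. apply functional_extensionality; intros x. apply vnorm_scal.
Qed.

Lemma supnorm_add_le (f g : KT K -> R) df dg : is_cont_deriv f df -> is_cont_deriv g dg ->
  supnorm (fun x => f x + g x) <= supnorm f + supnorm g /\
  supnormv (fun x => vadd (df x) (dg x)) <= supnormv df + supnormv dg.
Proof.
  intros Hf Hg.
  pose proof (supnorm_nonneg f df Hf); pose proof (supnorm_nonneg g dg Hg).
  pose proof (supnormv_nonneg f df Hf); pose proof (supnormv_nonneg g dg Hg).
  split.
  - apply supnorm_le; [lra|]. intros x. eapply Rle_trans; [apply Rabs_triang|].
    pose proof (supnorm_ge f df x Hf); pose proof (supnorm_ge g dg x Hg). lra.
  - apply supnormv_le; [lra|]. intros x. eapply Rle_trans; [apply vnorm_add_le|].
    pose proof (supnormv_ge f df x Hf); pose proof (supnormv_ge g dg x Hg). lra.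
Qed.

Lemma supnorm_zero : supnorm (fun _ : KT K => 0) = 0 /\ supnormv (fun _ : KT K => @vzero d) = 0.
Proof.
  pose proof (@cont_deriv_zero d K).
  split; apply Rle_antisym; try (eapply supnorm_nonneg || eapply supnormv_nonneg; eauto).
  - apply supnorm_le; [lra|]. intros; rewrite Rabs_R0; lra.
  - apply supnormv_le; [lra|]. intros; rewrite vnorm_zero; lra.
Qed.

Definition deriv_sups (f : KT K -> R) : R -> Prop :=
  fun r => exists df, is_cont_deriv f df /\ r = supnormv df.

Lemma deriv_sups_nonneg (f : KT K -> R) r : deriv_sups f r -> 0 <= r.
Proof. intros [df [H ->]]. eapply supnormv_nonneg; eauto. Qed.

Lemma C1norm_le (f : KT K -> R) df : is_cont_deriv f df -> C1norm K f <= supnorm f + supnormv df.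
Proof.
  intros H. unfold C1norm. fold (deriv_sups f).
  assert (inf_R (deriv_sups f) <= supnormv df); [|lra].
  apply (inf_R_glb (deriv_sups f)).
  - exists 0; apply deriv_sups_nonneg.
  - exists (supnormv df), df; auto.
  - exists df; auto.
Qed.

Lemma C1norm_approx (f : KT K -> R) eps : C1 K f -> eps > 0 ->
  exists df, is_cont_deriv f df /\ supnorm f + supnormv df < C1norm K f + eps.
Proof.
  intros [df0 H0] Heps.
  destruct (inf_R_approx (deriv_sups f) eps) as [r [[df [Hdf ->]] Hr]]; auto.
  - exists 0; apply deriv_sups_nonneg.
  - exists (supnormv df0), df0; auto.
  - exists df; split; auto. unfold C1norm. fold (deriv_sups f). lra.
Qed.

Lemma supnorm_le_C1norm (f : KT K -> R) : C1 K f -> supnorm f <= C1norm K f.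
Proof.
  intros [df H]. unfold C1norm. fold (deriv_sups f).
  assert (0 <= inf_R (deriv_sups f)); [|lra].
  apply (inf_R_glb (deriv_sups f)).
  - exists 0; apply deriv_sups_nonneg.
  - exists (supnormv df), df; auto.
  - apply deriv_sups_nonneg.
Qed.

Lemma Rabs_le_C1norm (f : KT K -> R) x : C1 K f -> Rabs (f x) <= C1norm K f.
Proof.
  intros Hf. pose proof (supnorm_le_C1norm f Hf). destruct Hf as [df Hdf].
  pose proof (supnorm_ge f df x Hdf). lra.
Qed.

Lemma C1norm_nonneg (f : KT K -> R) : C1 K f -> 0 <= C1norm K f.
Proof.
  intros Hf. pose proof (supnorm_le_C1norm f Hf). destruct Hf as [df Hdf].
  pose proof (supnorm_nonneg f df Hdf). lra.
Qed.

Lemma C1_zero : C1 K (fun _ => 0).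
Proof. exists (fun _ => vzero). apply cont_deriv_zero. Qed.

Lemma C1_add (f g : KT K -> R) : C1 K f -> C1 K g -> C1 K (fun x => f x + g x).
Proof. intros [df Hf] [dg Hg]. eexists. apply cont_deriv_add; eauto. Qed.

Lemma C1_scal c (f : KT K -> R) : C1 K f -> C1 K (fun x => c * f x).
Proof. intros [df Hf]. eexists. apply cont_deriv_scal; eauto. Qed.

Lemma C1norm_scal_le c (f : KT K -> R) : C1 K f -> C1norm K (fun x => c * f x) <= Rabs c * C1norm K f.
Proof.
  intros Hf. apply Rnot_lt_le. intros Hlt. pose proof (Rabs_pos c) as Hc0.
  set (eps := (C1norm K (fun x => c * f x) - Rabs c * C1norm K f) / (Rabs c + 1)).
  assert (Heps : eps > 0) by (apply Rdiv_lt_0_compat; lra).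
  destruct (C1norm_approx f eps Hf Heps) as [df [Hdf Hlt']].
  pose proof (C1norm_le _ _ (cont_deriv_scal f df c Hdf)) as Hle.
  destruct (supnorm_scal f df c Hdf) as [E1 E2]. rewrite E1, E2 in Hle.
  assert (Rabs c * (supnorm f + supnormv df) <= Rabs c * (C1norm K f + eps))
    by (apply Rmult_le_compat_l; lra).
  assert (eps * (Rabs c + 1) = C1norm K (fun x => c * f x) - Rabs c * C1norm K f)
    by (unfold eps; field; lra).
  nra.
Qed.

Lemma C1norm_scal c (f : KT K -> R) : C1 K f -> C1norm K (fun x => c * f x) = Rabs c * C1norm K f.
Proof.
  intros Hf. apply Rle_antisym; [apply C1norm_scal_le; auto|].
  destruct (Req_dec c 0) as [->|Hc].
  - rewrite Rabs_R0, Rmult_0_l. apply C1norm_nonneg, C1_scal; auto.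
  - pose proof (C1norm_scal_le (/ c) _ (C1_scal c f Hf)) as H. cbv beta in H.
    replace (fun x => / c * (c * f x)) with f in H
      by (apply functional_extensionality; intros; field; auto).
    rewrite Rabs_inv in H. assert (Rabs c > 0) by (apply Rabs_pos_lt; auto).
    apply (Rmult_le_compat_l (Rabs c)) in H; [|lra].
    replace (Rabs c * (/ Rabs c * C1norm K (fun x => c * f x))) with (C1norm K (fun x => c * f x))
      in H by (field; lra).
    lra.
Qed.

Lemma C1norm_add_le (f g : KT K -> R) : C1 K f -> C1 K g ->
  C1norm K (fun x => f x + g x) <= C1norm K f + C1norm K g.
Proof.
  intros Hf Hg. apply Rnot_lt_le. intros Hlt.
  set (eps := (C1norm K (fun x => f x + g x) - (C1norm K f + C1norm K g)) / 2).
  assert (Heps : eps > 0) by (unfold eps; lra).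
  destruct (C1norm_approx f eps Hf Heps) as [df [Hdf Lf]].
  destruct (C1norm_approx g eps Hg Heps) as [dg [Hdg Lg]].
  pose proof (C1norm_le _ _ (cont_deriv_add f g df dg Hdf Hdg)).
  destruct (supnorm_add_le f g df dg Hdf Hdg). unfold eps in *. lra.
Qed.

Lemma C1norm_zero : C1norm K (fun _ : KT K => 0) = 0.
Proof.
  apply Rle_antisym; [|apply C1norm_nonneg, C1_zero].
  pose proof (C1norm_le _ _ cont_deriv_zero). destruct supnorm_zero. lra.
Qed.

Lemma C1_normed_space :
  normed_space (C1 K) (fun _ => 0) (fun f g x => f x + g x) (fun c f x => c * f x) (C1norm K).
Proof.
  split; [split; [|split]|split; [|split; [|split; [|split]]]].
  - apply C1_zero.
  - apply C1_add.
  - intros; apply C1_scal; auto.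
  - apply C1norm_zero.
  - apply C1norm_nonneg.
  - intros f Hf E. apply functional_extensionality; intros x.
    pose proof (Rabs_le_C1norm f x Hf). pose proof (Rabs_pos (f x)).
    apply NNPP. intros Hfx. apply (Rabs_no_R0 _ Hfx). lra.
  - intros; apply C1norm_scal; auto.
  - apply C1norm_add_le.
Qed.

Lemma J1_normed_space :
  normed_space (J1 K) (fun _ => 0, fun _ => vzero)
    (fun p q => (fun x => fst p x + fst q x, fun x => vadd (snd p x) (snd q x)))
    (fun c p => (fun x => c * fst p x, fun x => vscal c (snd p x)))
    (J1norm K).
Proof.
  unfold J1, J1norm; simpl.
  split; [split; [|split]|split; [|split; [|split; [|split]]]].
  - apply cont_deriv_zero.
  - intros [f df] [g dg]; simpl; apply cont_deriv_add.
  - intros c [f df]; simpl; apply cont_deriv_scal.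
  - destruct supnorm_zero as [Z1 Z2]. simpl. rewrite Z1, Z2. ring.
  - intros [f df] H; simpl in *.
    pose proof (supnorm_nonneg f df H); pose proof (supnormv_nonneg f df H); lra.
  - intros [f df] H E; simpl in *.
    pose proof (supnorm_nonneg f df H); pose proof (supnormv_nonneg f df H).
    f_equal; apply functional_extensionality; intros x.
    + pose proof (supnorm_ge f df x H). pose proof (Rabs_pos (f x)).
      apply NNPP. intros Hfx. apply (Rabs_no_R0 _ Hfx). lra.
    + pose proof (supnormv_ge f df x H). pose proof (vnorm_nonneg (df x)). apply vnorm_eq0. lra.
  - intros c [f df] H; simpl in *. destruct (supnorm_scal f df c H) as [-> ->]. ring.
  - intros [f df] [g dg] Hf Hg; simpl in *. destruct (supnorm_add_le f g df dg Hf Hg). lra.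
Qed.

End Norms.

Lemma choice_fun {A B : Type} (P : A -> B -> Prop) :
  (forall a, exists b, P a b) -> exists f : A -> B, forall a, P a (f a).
Proof.
  intros H. exists (fun a => proj1_sig (constructive_indefinite_description _ (H a))).
  intros a. apply proj2_sig.
Qed.

Lemma half_pow_pos n : 0 < (1/2)^n.
Proof. apply pow_lt; lra. Qed.

Lemma half_pow_le k n : (k <= n)%nat -> (1/2)^n <= (1/2)^k.
Proof. induction 1; [lra|]. simpl. pose proof (half_pow_pos m). lra. Qed.

Lemma half_pow_small eps : eps > 0 -> exists N, forall n, (N <= n)%nat -> (1/2)^n < eps.
Proof.
  intros H. destruct (pow_lt_1_zero (1/2)) with (y := eps) as [N HN]; auto.
  { rewrite Rabs_right; lra. }
  exists N. intros n Hn. specialize (HN n Hn).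
  rewrite Rabs_right in HN; auto. apply Rle_ge, Rlt_le, half_pow_pos.
Qed.

Fixpoint running_max (M : nat -> nat) (k : nat) : nat :=
  match k with O => M O | S k => S (Nat.max (running_max M k) (M (S k))) end.

Lemma cauchy_fast_subseq (D : nat -> nat -> R) :
  (forall eps, eps > 0 -> exists M, forall n m, (M <= n)%nat -> (M <= m)%nat -> D n m < eps) ->
  exists phi : nat -> nat,
    (forall k, (k <= phi k)%nat) /\ (forall k p, (k <= p)%nat -> (phi k <= phi p)%nat) /\
    (forall k n m, (phi k <= n)%nat -> (phi k <= m)%nat -> D n m < (1/2)^k).
Proof.
  intros Hc. destruct (choice_fun (fun k M => forall n m, (M <= n)%nat -> (M <= m)%nat ->
    D n m < (1/2)^k)) as [M HM].
  { intros k. apply Hc, half_pow_pos. }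
  assert (Hge : forall k, (M k <= running_max M k)%nat) by (destruct k; simpl; lia).
  exists (running_max M). split; [|split].
  - induction k; simpl; lia.
  - induction 1; simpl; lia.
  - intros k n m Hn Hm. apply HM; specialize (Hge k); lia.
Qed.

Definition lim (a : nat -> R) : R := epsilon (inhabits 0) (fun l => Un_cv a l).

Lemma lim_spec a : Cauchy_crit a -> Un_cv a (lim a).
Proof. intros H. unfold lim. apply epsilon_spec. destruct (R_complete a H) as [l Hl]. eauto. Qed.

Lemma lim_le (a : nat -> R) l M e : Un_cv a l -> (forall m, (M <= m)%nat -> a m <= e) -> l <= e.
Proof.
  intros Hc H. apply Rnot_lt_le. intros Hlt. destruct (Hc (l - e)) as [N HN]; [lra|].
  specialize (HN (Nat.max M N) ltac:(lia)). specialize (H (Nat.max M N) ltac:(lia)).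
  unfold Rdist in HN. pose proof (Rle_abs (l - a (Nat.max M N))).
  rewrite Rabs_minus_sym in H0. lra.
Qed.

Lemma lim_close (a : nat -> R) l M c e : Un_cv a l ->
  (forall m, (M <= m)%nat -> Rabs (c - a m) <= e) -> Rabs (c - l) <= e.
Proof.
  intros Hc H. apply (lim_le (fun m => Rabs (c - a m)) _ M); auto.
  apply cv_cvabs, CV_minus; auto. intros eps Heps; exists 0%nat; intros.
  unfold Rdist. rewrite Rminus_diag, Rabs_R0; auto.
Qed.

Definition limv {d} (w : nat -> Rd d) : Rd d.
Proof.
  exists (fun i => if Compare_dec.lt_dec i d then lim (fun n => coord (w n) i) else 0).
  intros i Hi. destruct (Compare_dec.lt_dec i d); auto. lia.
Defined.

Lemma limv_coord {d} (w : nat -> Rd d) :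
  (forall eps, eps > 0 -> exists M, forall n m, (M <= n)%nat -> (M <= m)%nat ->
     vnorm (vsub (w n) (w m)) < eps) ->
  forall i, Un_cv (fun n => coord (w n) i) (coord (limv w) i).
Proof.
  intros H i. unfold limv, coord at 2; simpl. destruct (Compare_dec.lt_dec i d) as [Hi|Hi].
  - apply lim_spec. intros eps Heps. destruct (H eps Heps) as [M HM]. exists M. intros n m Hn Hm.
    unfold Rdist. eapply Rle_lt_trans; [|apply (HM n m); auto].
    replace (coord (w n) i - coord (w m) i) with (coord (vsub (w n) (w m)) i) by (cbn; ring).
    apply coord_le_vnorm.
  - intros eps Heps. exists 0%nat. intros n _. unfold Rdist.
    rewrite coord_out by lia. rewrite Rminus_diag, Rabs_R0; auto.
Qed.

Lemma limv_close {d} (w : nat -> Rd d) a M e :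
  (forall i, Un_cv (fun n => coord (w n) i) (coord (limv w) i)) ->
  (forall m, (M <= m)%nat -> vnorm (vsub a (w m)) <= e) -> vnorm (vsub a (limv w)) <= e.
Proof.
  intros Hc H.
  assert (He : 0 <= e) by (pose proof (H M (le_n _)); pose proof (vnorm_nonneg (vsub a (w M))); lra).
  assert (Hsq : vdot (vsub a (limv w)) (vsub a (limv w)) <= e * e).
  { apply (lim_le (fun m => vdot (vsub a (w m)) (vsub a (w m))) _ M).
    - apply rsum_cv. intros i _.
      assert (Hi : Un_cv (fun m => coord (vsub a (w m)) i) (coord (vsub a (limv w)) i)).
      { apply CV_plus; [intros eps Heps; exists 0%nat; intros; unfold Rdist;
          rewrite Rminus_diag, Rabs_R0; auto|].
        apply (CV_mult (fun _ => -1) _ (-1)); auto.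
        intros eps Heps; exists 0%nat; intros; unfold Rdist; rewrite Rminus_diag, Rabs_R0; auto. }
      apply (CV_mult _ _ _ _ Hi Hi).
    - intros m Hm. rewrite <- vnorm_sq. pose proof (H m Hm).
      pose proof (vnorm_nonneg (vsub a (w m))). nra. }
  rewrite <- vnorm_sq in Hsq. pose proof (vnorm_nonneg (vsub a (limv w))). nra.
Qed.

Section UniformLimits.
Context {X : Type}.

Lemma uniform_limit_R (f : nat -> X -> R) :
  (forall eps, eps > 0 -> exists M, forall n m, (M <= n)%nat -> (M <= m)%nat ->
     forall x, Rabs (f n x - f m x) <= eps) ->
  exists F, forall eps, eps > 0 -> exists M, forall n, (M <= n)%nat ->
     forall x, Rabs (f n x - F x) <= eps.
Proof.
  intros Hc. exists (fun x => lim (fun n => f n x)). intros eps Heps.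
  destruct (Hc eps Heps) as [M HM]. exists M. intros n Hn x.
  apply (lim_close (fun m => f m x) _ M); [|intros m Hm; apply HM; auto].
  apply lim_spec. intros e He. destruct (Hc (e/2)) as [N HN]; [lra|]. exists N.
  intros p q Hp Hq. unfold Rdist. specialize (HN p q Hp Hq x). lra.
Qed.

Lemma uniform_limit_Rd {d} (g : nat -> X -> Rd d) :
  (forall eps, eps > 0 -> exists M, forall n m, (M <= n)%nat -> (M <= m)%nat ->
     forall x, vnorm (vsub (g n x) (g m x)) <= eps) ->
  exists G, forall eps, eps > 0 -> exists M, forall n, (M <= n)%nat ->
     forall x, vnorm (vsub (g n x) (G x)) <= eps.
Proof.
  intros Hc. exists (fun x => limv (fun n => g n x)). intros eps Heps.
  destruct (Hc eps Heps) as [M HM]. exists M. intros n Hn x.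
  apply (limv_close (fun m => g m x) _ M); [|intros m Hm; apply HM; auto].
  apply limv_coord. intros e He. destruct (Hc (e/2)) as [N HN]; [lra|]. exists N.
  intros p q Hp Hq. specialize (HN p q Hp Hq x). lra.
Qed.

End UniformLimits.

Definition fsub {T : Type} (f g : T -> R) : T -> R := fun x => f x + -1 * g x.

Section FunctionSpace.
Context {T : Type} (V : (T -> R) -> Prop) (N : (T -> R) -> R).
Hypothesis HN : normed_space V (fun _ => 0) (fun f g x => f x + g x) (fun c f x => c * f x) N.

Lemma V_fsub f g : V f -> V g -> V (fsub f g).
Proof. destruct HN as [[_ [Hadd Hscal]] _]. intros. apply Hadd; auto. Qed.

Lemma N_fsub_nonneg f g : V f -> V g -> 0 <= N (fsub f g).
Proof. intros. apply HN, V_fsub; auto. Qed.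

Lemma N_fsub_self f : N (fsub f f) = 0.
Proof.
  destruct HN as [_ [HN0 _]]. rewrite <- HN0. f_equal.
  apply functional_extensionality; intros; unfold fsub; ring.
Qed.

Lemma N_fsub_sym f g : V f -> V g -> N (fsub f g) = N (fsub g f).
Proof.
  destruct HN as [_ [_ [_ [_ [Hscal _]]]]]. intros Hf Hg.
  replace (fsub g f) with (fun x => -1 * fsub f g x)
    by (apply functional_extensionality; intros; unfold fsub; ring).
  rewrite Hscal by (apply V_fsub; auto). rewrite Rabs_left by lra. ring.
Qed.

Lemma N_fsub_triangle f g h : V f -> V g -> V h -> N (fsub f h) <= N (fsub f g) + N (fsub g h).
Proof.
  destruct HN as [_ [_ [_ [_ [_ Hadd]]]]]. intros Hf Hg Hh.
  replace (fsub f h) with (fun x => fsub f g x + fsub g h x)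
    by (apply functional_extensionality; intros; unfold fsub; ring).
  apply Hadd; apply V_fsub; auto.
Qed.

Lemma N_fsub_geometric (s : nat -> T -> R) q c : (forall n, V (s n)) ->
  (forall n, (q <= n)%nat -> N (fsub (s (S n)) (s n)) <= c * (1/2)^(S n)) ->
  forall p, (q <= p)%nat -> N (fsub (s p) (s q)) <= c * ((1/2)^q - (1/2)^p).
Proof.
  intros Hs Hstep p Hqp. induction Hqp.
  - rewrite N_fsub_self. right; ring.
  - eapply Rle_trans; [apply (N_fsub_triangle _ (s m)); auto|].
    specialize (Hstep m Hqp). simpl in *. lra.
Qed.

Lemma N_fsub_limit_bound (u : nat -> T -> R) v q b : (forall n, V (u n)) -> V v ->
  (forall eps, eps > 0 -> exists M, forall n, (M <= n)%nat -> N (fsub (u n) v) < eps) ->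
  (forall p, (q <= p)%nat -> N (fsub (u p) (u q)) <= b) -> N (fsub v (u q)) <= b.
Proof.
  intros Hu Hv Hconv Hb. apply Rnot_lt_le. intros Hlt.
  destruct (Hconv (N (fsub v (u q)) - b)) as [M HM]; [lra|].
  set (p := Nat.max M q).
  pose proof (N_fsub_triangle v (u p) (u q) Hv (Hu p) (Hu q)).
  rewrite (N_fsub_sym v (u p)) in H by auto.
  specialize (HM p ltac:(unfold p; lia)). specialize (Hb p ltac:(unfold p; lia)). lra.
Qed.

Lemma cauchy_subseq_limit (u : nat -> T -> R) (phi : nat -> nat) v : (forall n, V (u n)) -> V v ->
  (forall eps, eps > 0 -> exists M, forall n m, (M <= n)%nat -> (M <= m)%nat -> N (fsub (u n) (u m)) < eps) ->
  (forall k, (k <= phi k)%nat) ->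
  (forall eps, eps > 0 -> exists M, forall k, (M <= k)%nat -> N (fsub (u (phi k)) v) < eps) ->
  forall eps, eps > 0 -> exists M, forall n, (M <= n)%nat -> N (fsub (u n) v) < eps.
Proof.
  intros Hu Hv Hc Hphi Hsub eps Heps.
  destruct (Hc (eps/2)) as [M1 HM1]; [lra|]. destruct (Hsub (eps/2)) as [M2 HM2]; [lra|].
  set (k := Nat.max M1 M2). exists M1. intros n Hn.
  pose proof (N_fsub_triangle (u n) (u (phi k)) v (Hu n) (Hu _) Hv).
  specialize (HM1 n (phi k) Hn ltac:(specialize (Hphi k); unfold k in *; lia)).
  specialize (HM2 k ltac:(unfold k; lia)). lra.
Qed.

End FunctionSpace.

(** * The uniform boundedness principle *)

Lemma Rabs_add_same_sign a b : 0 <= a * b -> Rabs b <= Rabs (a + b).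
Proof. intros H. unfold Rabs. repeat destruct Rcase_abs; nra. Qed.

Section UniformBoundedness.
Context {T I : Type} (V : (T -> R) -> Prop) (N : (T -> R) -> R) (L : I -> (T -> R) -> R).
Hypothesis HB : BanachSpace V (fun _ => 0) (fun f g x => f x + g x) (fun c f x => c * f x) N.
Hypothesis L_linear : forall i f g c, V f -> V g -> L i (fun x => f x + c * g x) = L i f + c * L i g.
Hypothesis L_bounded : forall i, exists m, forall f, V f -> Rabs (L i f) <= m * N f.
Hypothesis L_pointwise_bounded : forall f, V f -> exists B, forall i, Rabs (L i f) <= B.

Let HN : normed_space V (fun _ => 0) (fun f g x => f x + g x) (fun c f x => c * f x) N :=
  conj (proj1 HB) (proj1 (proj2 HB)).

Lemma L_fsub i f g : V f -> V g -> L i (fsub f g) = L i f - L i g.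
Proof. intros Hf Hg. unfold fsub. rewrite L_linear by auto. ring. Qed.

(** A gliding hump: [pick C] is a functional [L i] and a vector [f] witnessing that [C] is not a
    uniform bound.  Step [n] adds to [s] a multiple of [f] of norm [2^-(n+1)/M], with the sign
    chosen so that [|L i s|] exceeds [n + 1] (hence the level [(n + 1) M / 2^-(n+1)]); [M]
    dominates the norms of all functionals used so far, so the remaining steps cannot undo this. *)
Section GlidingHump.
Variables (pick : R -> I * (T -> R)) (bnd : I -> R).
Hypothesis pick_spec : forall C, C > 0 ->
  V (snd (pick C)) /\ Rabs (L (fst (pick C)) (snd (pick C))) > C * N (snd (pick C)).
Hypothesis bnd_spec : forall i f, V f -> Rabs (L i f) <= bnd i * N f.

Definition hump_level (n : nat) (M : R) : R := INR (S n) * M / (1/2)^(S n).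

Definition hump_step (n : nat) (sM : (T -> R) * R) : (T -> R) * R :=
  let s := fst sM in let M := snd sM in
  let i := fst (pick (hump_level n M)) in let f := snd (pick (hump_level n M)) in
  let c := (1/2)^(S n) / (M * N f) in
  let a := if Rle_dec 0 (L i s * L i f) then c else - c in
  (fun x => s x + a * f x, Rmax M (bnd i)).

Fixpoint hump (n : nat) : (T -> R) * R :=
  match n with O => (fun _ => 0, 1) | S n => hump_step n (hump n) end.

Definition hump_index (n : nat) : I := fst (pick (hump_level n (snd (hump n)))).

Lemma hump_step_spec n : V (fst (hump n)) -> snd (hump n) >= 1 ->
  V (fst (hump (S n))) /\ snd (hump n) <= snd (hump (S n)) /\
  bnd (hump_index n) <= snd (hump (S n)) /\
  N (fsub (fst (hump (S n))) (fst (hump n))) <= / snd (hump n) * (1/2)^(S n) /\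
  Rabs (L (hump_index n) (fst (hump (S n)))) > INR (S n).
Proof.
  intros Hs HM. unfold hump_index. simpl hump. unfold hump_step.
  set (s := fst (hump n)) in *. set (M := snd (hump n)) in *.
  pose proof (half_pow_pos (S n)) as Hpow. pose proof (lt_0_INR (S n) ltac:(lia)) as Hn.
  assert (HC : hump_level n M > 0)
    by (apply Rdiv_lt_0_compat; [apply Rmult_lt_0_compat|]; lra).
  destruct (pick_spec _ HC) as [Hf Hbig].
  set (i := fst (pick (hump_level n M))) in *. set (f := snd (pick (hump_level n M))) in *.
  destruct HN as [[_ [Vadd Vscal]] [_ [Nnonneg [_ [Nscal _]]]]].
  assert (HNf : N f > 0).
  { destruct (Nnonneg f Hf) as [|E]; auto. pose proof (bnd_spec i f Hf).
    rewrite <- E in *. lra. }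
  set (c := (1/2)^(S n) / (M * N f)).
  assert (Hc : c > 0) by (apply Rdiv_lt_0_compat; [|apply Rmult_lt_0_compat]; lra).
  set (a := if Rle_dec 0 (L i s * L i f) then c else - c).
  assert (Ha : Rabs a = c /\ 0 <= L i s * (a * L i f)).
  { unfold a. destruct Rle_dec.
    - rewrite Rabs_right by lra. split; [auto | nra].
    - rewrite Rabs_left by lra. split; [ring | nra]. }
  simpl fst; simpl snd. split; [|split; [|split; [|split]]].
  - apply Vadd; auto.
  - apply Rmax_l.
  - apply Rmax_r.
  - replace (fsub (fun x => s x + a * f x) s) with (fun x => a * f x)
      by (apply functional_extensionality; intros; unfold fsub; ring).
    rewrite Nscal, (proj1 Ha) by auto. unfold c. right. field. split; lra.
  - rewrite L_linear by auto.
    eapply Rlt_le_trans; [|apply Rabs_add_same_sign, (proj2 Ha)].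
    rewrite Rabs_mult, (proj1 Ha).
    apply (Rle_lt_trans _ (c * (hump_level n M * N f))); [|apply Rmult_lt_compat_l; lra].
    right. unfold c, hump_level. field. lra.
Qed.

Lemma hump_invariant n : V (fst (hump n)) /\ snd (hump n) >= 1.
Proof.
  induction n as [|n [Hs HM]].
  - split; [apply HN | simpl; lra].
  - destruct (hump_step_spec n Hs HM) as [H1 [H2 _]]. split; [auto | lra].
Qed.

Lemma hump_spec n :
  V (fst (hump (S n))) /\ snd (hump n) <= snd (hump (S n)) /\
  bnd (hump_index n) <= snd (hump (S n)) /\
  N (fsub (fst (hump (S n))) (fst (hump n))) <= / snd (hump n) * (1/2)^(S n) /\
  Rabs (L (hump_index n) (fst (hump (S n)))) > INR (S n).
Proof. apply hump_step_spec; apply hump_invariant. Qed.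

Lemma hump_bound_mono q n : (q <= n)%nat -> snd (hump q) <= snd (hump n).
Proof. induction 1; [lra|]. pose proof (hump_spec m). lra. Qed.

Lemma hump_increments q p : (q <= p)%nat ->
  N (fsub (fst (hump p)) (fst (hump q))) <= / snd (hump q) * ((1/2)^q - (1/2)^p).
Proof.
  apply (N_fsub_geometric V N HN (fun n => fst (hump n))); [intros; apply hump_invariant|].
  intros n Hn. destruct (hump_spec n) as [_ [_ [_ [Hstep _]]]].
  eapply Rle_trans; [apply Hstep|]. apply Rmult_le_compat_r; [apply Rlt_le, half_pow_pos|].
  pose proof (hump_invariant q). pose proof (hump_bound_mono q n Hn).
  apply Rinv_le_contravar; lra.
Qed.

Lemma hump_cauchy q p : (q <= p)%nat -> N (fsub (fst (hump p)) (fst (hump q))) <= (1/2)^q.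
Proof.
  intros Hqp. eapply Rle_trans; [apply hump_increments; auto|].
  pose proof (hump_invariant q). pose proof (half_pow_pos p). pose proof (half_pow_le q p Hqp).
  assert (0 < / snd (hump q) <= 1) by (split; [apply Rinv_0_lt_compat | rewrite <- Rinv_1;
    apply Rinv_le_contravar]; lra).
  nra.
Qed.

Lemma gliding_hump_absurd : False.
Proof.
  destruct (proj2 (proj2 HB) (fun n => fst (hump n))) as [s [Hs Hconv]].
  { intros; apply hump_invariant. }
  { intros eps Heps. destruct (half_pow_small eps Heps) as [k Hk]. exists k. intros n m Hn Hm.
    destruct (Nat.le_ge_cases m n).
    - eapply Rle_lt_trans; [apply hump_cauchy; auto | apply Hk; auto].
    - change (N (fsub (fst (hump n)) (fst (hump m))) < eps).
      rewrite (N_fsub_sym V N HN) by (auto; apply hump_invariant).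
      eapply Rle_lt_trans; [apply hump_cauchy; auto | apply Hk; auto]. }
  destruct (L_pointwise_bounded s Hs) as [B HBs].
  destruct (INR_unbounded B) as [n Hn].
  destruct (hump_spec n) as [Hsn [_ [Hbnd [_ Hbig]]]].
  set (M := snd (hump (S n))) in *. set (i := hump_index n) in *.
  assert (Htail : N (fsub s (fst (hump (S n)))) <= / M * (1/2)^(S n)).
  { apply (N_fsub_limit_bound V N HN (fun n => fst (hump n))); auto.
    - intros; apply hump_invariant.
    - intros p Hp. eapply Rle_trans; [apply hump_increments; auto|].
      apply Rmult_le_compat_l; [|pose proof (half_pow_pos p); lra].
      pose proof (hump_invariant (S n)). apply Rlt_le, Rinv_0_lt_compat; unfold M; lra. }
  assert (Hdiff : Rabs (L i s - L i (fst (hump (S n)))) <= 1).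
  { rewrite <- L_fsub by auto. eapply Rle_trans; [apply bnd_spec, (V_fsub V N HN); auto|].
    pose proof (N_fsub_nonneg V N HN s (fst (hump (S n))) Hs Hsn).
    pose proof (hump_invariant (S n)). pose proof (half_pow_le 0 (S n) ltac:(lia)).
    apply (Rle_trans _ (M * N (fsub s (fst (hump (S n)))))); [apply Rmult_le_compat_r; auto|].
    apply (Rle_trans _ (M * (/ M * (1/2)^(S n)))); [apply Rmult_le_compat_l; unfold M in *; lra|].
    rewrite <- Rmult_assoc, Rinv_r by (unfold M; lra). simpl in *. lra. }
  pose proof (HBs i). pose proof (Rabs_triang_inv (L i (fst (hump (S n)))) (L i s)).
  rewrite Rabs_minus_sym in Hdiff. rewrite S_INR in Hbig. lra.
Qed.

End GlidingHump.

Theorem uniform_boundedness : exists C, C > 0 /\ forall i f, V f -> Rabs (L i f) <= C * N f.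
Proof.
  apply NNPP. intros Hno.
  assert (Hbad : forall C, C > 0 -> exists i f, V f /\ Rabs (L i f) > C * N f).
  { intros C HC. apply NNPP. intros Hgood. apply Hno. exists C; split; auto.
    intros i f Hf. apply Rnot_lt_le. intros Hlt. apply Hgood; eauto. }
  destruct (Hbad 1) as [i0 [f0 _]]; [lra|].
  destruct (choice_fun (fun C (p : I * (T -> R)) => C > 0 ->
    V (snd p) /\ Rabs (L (fst p) (snd p)) > C * N (snd p))) as [pick Hpick].
  { intros C. destruct (Rlt_dec 0 C) as [HC|HC].
    - destruct (Hbad C HC) as [i [f Hif]]. exists (i, f); auto.
    - exists (i0, f0). intros; lra. }
  destruct (choice_fun (fun i m => forall f, V f -> Rabs (L i f) <= m * N f) L_bounded)
    as [bnd Hbnd].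
  exact (gliding_hump_absurd pick bnd Hpick Hbnd).
Qed.

End UniformBoundedness.

(** * The three conditions *)

Definition jadd {d} {K : Rd d -> Prop} (p q : (KT K -> R) * (KT K -> Rd d)) :
    (KT K -> R) * (KT K -> Rd d) :=
  (fun x => fst p x + fst q x, fun x => vadd (snd p x) (snd q x)).
Definition jscal {d} {K : Rd d -> Prop} (c : R) (p : (KT K -> R) * (KT K -> Rd d)) :
    (KT K -> R) * (KT K -> Rd d) :=
  (fun x => c * fst p x, fun x => vscal c (snd p x)).
Definition jsub {d} {K : Rd d -> Prop} (p q : (KT K -> R) * (KT K -> Rd d)) :
    (KT K -> R) * (KT K -> Rd d) := jadd p (jscal (-1) q).

Section Conditions.
Context {d : nat} {K : Rd d -> Prop} (HK : compact_Rd K).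

Lemma J1_Banach_iff : J1_Banach K <-> complete_space (J1 K) jadd jscal (J1norm K).
Proof. apply BanachSpace_iff, J1_normed_space, HK. Qed.

Lemma C1_Banach_iff :
  C1_Banach K <-> complete_space (C1 K) (fun f g x => f x + g x) (fun c f x => c * f x) (C1norm K).
Proof. apply BanachSpace_iff, C1_normed_space, HK. Qed.

Lemma C1_Banach_cond_c : C1_Banach K -> cond_c K.
Proof.
  intros HB x.
  set (L := fun (y : {y : KT K | pt y <> pt x}) (f : KT K -> R) =>
    (f (proj1_sig y) - f x) / vd x (proj1_sig y)).
  assert (Hv : forall y : {y : KT K | pt y <> pt x}, vd x (proj1_sig y) > 0)
    by (intros [y Hy]; apply vd_pos; auto).
  destruct (uniform_boundedness (C1 K) (C1norm K) L HB) as [C [HC HL]].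
  - intros y f g c _ _. unfold L. specialize (Hv y). field. lra.
  - intros y. exists (2 / vd x (proj1_sig y)). intros f Hf. unfold L.
    rewrite Rabs_div_pos by auto. specialize (Hv y).
    apply Rdiv_le_iff; auto. replace (2 / vd x (proj1_sig y) * C1norm K f * vd x (proj1_sig y))
      with (2 * C1norm K f) by (field; lra).
    pose proof (Rabs_le_C1norm HK f (proj1_sig y) Hf). pose proof (Rabs_le_C1norm HK f x Hf).
    pose proof (Rabs_triang (f (proj1_sig y)) (- f x)). rewrite Rabs_Ropp in H1.
    unfold Rminus. lra.
  - intros f [df Hdf]. destruct (cont_deriv_quotient_bounded HK f df x Hdf) as [B HBq].
    exists B. intros y. unfold L. rewrite Rabs_div_pos by auto. apply Rdiv_le_iff; auto.
  - exists C; split; auto. intros f Hf y Hyx.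
    specialize (HL (exist _ y Hyx) f Hf). unfold L in HL. simpl in HL.
    rewrite Rabs_div_pos in HL by (apply vd_pos; auto). exact HL.
Qed.

Lemma J1_jsub p q : J1 K p -> J1 K q -> J1 K (jsub p q).
Proof.
  intros Hp Hq. destruct (J1_normed_space HK) as [[_ [Hadd Hscal]] _].
  apply Hadd, Hscal; auto.
Qed.

Fixpoint partial_sums (D0 : KT K -> Rd d) (D : nat -> KT K -> Rd d) (k : nat) : KT K -> Rd d :=
  match k with O => D0 | S k => fun x => vadd (partial_sums D0 D k x) (D k x) end.

Lemma partial_sums_cauchy D0 (D : nat -> KT K -> Rd d) :
  (forall k x, vnorm (D k x) <= (1/2)^k) ->
  forall k p q x, (k <= p)%nat -> (k <= q)%nat ->
  vnorm (vsub (partial_sums D0 D p x) (partial_sums D0 D q x)) <= 2 * (1/2)^k.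
Proof.
  intros HD k.
  assert (Htel : forall q p x, (q <= p)%nat ->
    vnorm (vsub (partial_sums D0 D p x) (partial_sums D0 D q x)) <= 2 * (1/2)^q - 2 * (1/2)^p).
  { intros q p x. induction 1; [rewrite vdist_self; lra|].
    simpl. replace (vsub (vadd (partial_sums D0 D m x) (D m x)) (partial_sums D0 D q x))
      with (vadd (vsub (partial_sums D0 D m x) (partial_sums D0 D q x)) (D m x)) by vec_ring.
    eapply Rle_trans; [apply vnorm_add_le|]. specialize (HD m x). lra. }
  assert (Hord : forall p q x, (k <= q)%nat -> (q <= p)%nat ->
    vnorm (vsub (partial_sums D0 D p x) (partial_sums D0 D q x)) <= 2 * (1/2)^k).
  { intros p q x Hkq Hqp. eapply Rle_trans; [apply Htel; auto|].
    pose proof (half_pow_pos p). pose proof (half_pow_le k q Hkq). lra. }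
  intros p q x Hp Hq. destruct (Nat.le_ge_cases q p); [apply Hord; auto|].
  rewrite vdist_sym. apply Hord; auto.
Qed.

(** Pass to a subsequence whose increments have [C^1]-norm below [2^-k], choose derivatives of
    these increments with sup norm below [2^-k], and sum them. *)
Lemma C1_cauchy_lift (u : nat -> KT K -> R) : (forall n, C1 K (u n)) ->
  (forall eps, eps > 0 -> exists M, forall n m, (M <= n)%nat -> (M <= m)%nat ->
     C1norm K (fsub (u n) (u m)) < eps) ->
  exists (phi : nat -> nat) (E : nat -> KT K -> Rd d),
    (forall k, (k <= phi k)%nat) /\ (forall k, J1 K (u (phi k), E k)) /\
    (forall eps, eps > 0 -> exists M, forall k l, (M <= k)%nat -> (M <= l)%nat ->
       J1norm K (jsub (u (phi k), E k) (u (phi l), E l)) < eps).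
Proof.
  intros Hu Hcau. pose proof (C1_normed_space HK) as HN.
  destruct (cauchy_fast_subseq _ Hcau) as [phi [Hphi [Hmono Hfast]]].
  set (h := fun k => fsub (u (phi (S k))) (u (phi k))).
  assert (Hh : forall k, C1 K (h k) /\ C1norm K (h k) < (1/2)^k).
  { intros k. split; [apply (V_fsub _ _ HN); auto|]. apply Hfast; auto. }
  destruct (choice_fun (fun k D => is_cont_deriv (h k) D /\ supnorm (h k) + supnormv D < (1/2)^k))
    as [D HD].
  { intros k. destruct (Hh k) as [Hk1 Hk2].
    destruct (C1norm_approx HK (h k) ((1/2)^k - C1norm K (h k)) Hk1) as [D [HD1 HD2]]; [lra|].
    exists D; split; auto. lra. }
  destruct (Hu (phi 0%nat)) as [D0 HD0].
  set (E := partial_sums D0 D).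
  assert (HE : forall k, is_cont_deriv (u (phi k)) (E k)).
  { induction k; [exact HD0|].
    replace (u (phi (S k))) with (fun x => u (phi k) x + h k x)
      by (apply functional_extensionality; intros; unfold h, fsub; ring).
    apply cont_deriv_add; auto. apply HD. }
  assert (HDb : forall k x, vnorm (D k x) <= (1/2)^k).
  { intros k x. destruct (HD k) as [Hk1 Hk2].
    pose proof (supnormv_ge HK _ _ x Hk1). pose proof (supnorm_nonneg HK _ _ Hk1). lra. }
  exists phi, E. split; [auto | split; [exact HE|]].
  intros eps Heps. destruct (half_pow_small (eps/3)) as [k Hk]; [lra|]. exists k.
  intros p q Hp Hq. unfold J1norm, jsub, jadd, jscal; simpl.
  assert (supnorm (fsub (u (phi p)) (u (phi q))) < (1/2)^k).
  { eapply Rle_lt_trans; [apply supnorm_le_C1norm, (V_fsub _ _ HN); auto|].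
    apply Hfast; apply Hmono; auto. }
  assert (supnormv (fun x => vadd (E p x) (vscal (-1) (E q x))) <= 2 * (1/2)^k).
  { apply supnormv_le; [pose proof (half_pow_pos k); lra|].
    intros x. apply partial_sums_cauchy; auto. }
  specialize (Hk k (le_n _)). unfold fsub in *. lra.
Qed.

Lemma J1_complete_C1_complete :
  complete_space (J1 K) jadd jscal (J1norm K) ->
  complete_space (C1 K) (fun f g x => f x + g x) (fun c f x => c * f x) (C1norm K).
Proof.
  intros HJ u Hu Hcau. pose proof (C1_normed_space HK) as HN.
  destruct (C1_cauchy_lift u Hu Hcau) as [phi [E [Hphi [HE HJcau]]]].
  destruct (HJ (fun k => (u (phi k), E k)) HE HJcau) as [[F G] [HFG Hconv]].
  exists F. split; [exists G; exact HFG|].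
  apply (cauchy_subseq_limit _ _ HN u phi F); auto; [exists G; exact HFG|].
  intros eps Heps. destruct (Hconv eps Heps) as [M HM]. exists M. intros k Hk.
  eapply Rle_lt_trans; [|apply (HM k Hk)].
  apply C1norm_le, (J1_jsub (u (phi k), E k) (F, G)); auto.
Qed.

Lemma J1_jsub_bounds p q x : J1 K p -> J1 K q ->
  Rabs (fst p x - fst q x) <= J1norm K (jsub p q) /\
  vnorm (vsub (snd p x) (snd q x)) <= J1norm K (jsub p q).
Proof.
  intros Hp Hq. pose proof (J1_jsub p q Hp Hq) as H. unfold J1, J1norm in *.
  pose proof (supnorm_ge HK _ _ x H); pose proof (supnorm_nonneg HK _ _ H).
  pose proof (supnormv_ge HK _ _ x H); pose proof (supnormv_nonneg HK _ _ H).
  simpl in *. split; [|unfold vsub; lra].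
  replace (fst p x - fst q x) with (fst p x + -1 * fst q x) by ring. lra.
Qed.

Lemma cond_c_J1norm : cond_c K -> forall x, exists C, C > 0 /\
  forall f df, is_cont_deriv f df -> forall y, Rabs (f y - f x) <= C * J1norm K (f, df) * vd x y.
Proof.
  intros Hc x. destruct (Hc x) as [C [HC HCb]]. exists C; split; auto. intros f df Hdf y.
  destruct (classic (pt y = pt x)) as [E|E].
  - rewrite (KT_ext y x E), Rminus_diag, Rabs_R0. unfold vd. rewrite vdist_self. lra.
  - specialize (HCb f (ex_intro _ df Hdf) y E). apply (Rdiv_le_iff _ _ _ (vd_pos x y E)) in HCb.
    eapply Rle_trans; [apply HCb|]. apply Rmult_le_compat_r; [apply vnorm_nonneg|].
    apply Rmult_le_compat_l; [lra | apply C1norm_le; auto].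
Qed.

Lemma cont_on_v_uniform_limit (g : nat -> KT K -> Rd d) G : (forall n, cont_on_v (g n)) ->
  (forall eps, eps > 0 -> exists M, forall n, (M <= n)%nat -> forall x, vnorm (vsub (g n x) (G x)) <= eps) ->
  cont_on_v G.
Proof.
  intros Hg Hunif x eps Heps. destruct (Hunif (eps/3)) as [M HM]; [lra|].
  destruct (Hg M x (eps/3)) as [delta [Hd Hc]]; [lra|]. exists delta; split; auto.
  intros y Hy. specialize (Hc y Hy).
  pose proof (HM M (le_n _) y) as A1. pose proof (HM M (le_n _) x) as A2. rewrite vdist_sym in A1.
  pose proof (vdist_triangle (G y) (g M y) (G x)). pose proof (vdist_triangle (g M y) (g M x) (G x)).
  lra.
Qed.

Lemma J1_limit_remainder (u : nat -> (KT K -> R) * (KT K -> Rd d)) F G : cond_c K ->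
  (forall n, J1 K (u n)) ->
  (forall eps, eps > 0 -> exists M, forall n m, (M <= n)%nat -> (M <= m)%nat ->
     J1norm K (jsub (u n) (u m)) < eps) ->
  (forall x, Un_cv (fun n => fst (u n) x) (F x)) ->
  (forall eps, eps > 0 -> exists M, forall n, (M <= n)%nat ->
     forall x, vnorm (vsub (snd (u n) x) (G x)) <= eps) ->
  forall (x : KT K) eps, eps > 0 -> exists delta, delta > 0 /\
    forall y : KT K, pt y <> pt x -> vnorm (vsub (pt y) (pt x)) < delta ->
      Rabs (F y - F x - vdot (G x) (vsub (pt y) (pt x))) / vnorm (vsub (pt y) (pt x)) < eps.
Proof.
  intros Hc Hu Hcau HF HG x eps Heps. destruct (cond_c_J1norm Hc x) as [C [HC HCb]].
  set (eta := eps / (C + 3)).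
  assert (Heta : eta > 0) by (apply Rdiv_lt_0_compat; lra).
  assert (Heta_small : eta + C * eta + eta < eps).
  { assert (C * eta + 3 * eta = eps) by (unfold eta; field; lra). lra. }
  destruct (HG eta Heta) as [M1 HM1]. destruct (Hcau eta Heta) as [M2 HM2].
  set (n := Nat.max M1 M2).
  destruct (proj2 (Hu n) x eta Heta) as [delta [Hd Hrem]]. exists delta; split; auto.
  intros y E Hy. assert (Hv : vd x y > 0) by (apply vd_pos; auto).
  specialize (Hrem y E Hy). apply (Rdiv_lt_iff _ _ _ Hv) in Hrem. apply (Rdiv_lt_iff _ _ _ Hv).
  change (vnorm (vsub (pt y) (pt x))) with (vd x y) in *. set (h := vsub (pt y) (pt x)) in *.
  set (f := fst (u n)) in *. set (g := snd (u n)) in *.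
  assert (Hinc : Rabs ((f y - f x) - (F y - F x)) <= C * eta * vd x y).
  { apply (lim_close (fun m => fst (u m) y - fst (u m) x) _ M2); [apply CV_minus; auto|].
    intros m Hm. pose proof (HCb _ _ (J1_jsub _ _ (Hu n) (Hu m)) y) as Hq.
    change (J1norm K (fst (jsub (u n) (u m)), snd (jsub (u n) (u m))))
      with (J1norm K (jsub (u n) (u m))) in Hq.
    assert (J1norm K (jsub (u n) (u m)) < eta) by (apply HM2; unfold n; lia).
    replace (f y - f x - (fst (u m) y - fst (u m) x))
      with (f y + -1 * fst (u m) y - (f x + -1 * fst (u m) x)) by ring.
    eapply Rle_trans; [apply Hq|]. apply Rmult_le_compat_r; [apply vnorm_nonneg|].
    apply Rmult_le_compat_l; lra. }
  assert (Hder : Rabs (vdot (g x) h - vdot (G x) h) <= eta * vd x y).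
  { rewrite <- vdot_sub_l. eapply Rle_trans; [apply vdot_cauchy_schwarz|].
    apply Rmult_le_compat_r; [apply vnorm_nonneg | apply HM1; unfold n; lia]. }
  replace (F y - F x - vdot (G x) h)
    with ((f y - f x - vdot (g x) h) - ((f y - f x) - (F y - F x)) + (vdot (g x) h - vdot (G x) h))
    by ring.
  assert ((eta + C * eta + eta) * vd x y < eps * vd x y) by (apply Rmult_lt_compat_r; lra).
  eapply Rle_lt_trans; [apply Rabs_triang3|]. lra.
Qed.

Lemma cond_c_J1_complete : cond_c K -> complete_space (J1 K) jadd jscal (J1norm K).
Proof.
  intros Hc u Hu Hcau.
  assert (Hbounds := fun n m x => J1_jsub_bounds (u n) (u m) x (Hu n) (Hu m)).
  unfold jsub in Hbounds.
  destruct (uniform_limit_R (fun n => fst (u n))) as [F HF].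
  { intros eps Heps. destruct (Hcau eps Heps) as [M HM]. exists M. intros n m Hn Hm x.
    pose proof (HM n m Hn Hm). pose proof (proj1 (Hbounds n m x)). lra. }
  destruct (uniform_limit_Rd (fun n => snd (u n))) as [G HG].
  { intros eps Heps. destruct (Hcau eps Heps) as [M HM]. exists M. intros n m Hn Hm x.
    pose proof (HM n m Hn Hm). pose proof (proj2 (Hbounds n m x)). lra. }
  assert (HFx : forall x, Un_cv (fun n => fst (u n) x) (F x)).
  { intros x eps Heps. destruct (HF (eps/2)) as [M HM]; [lra|]. exists M. intros n Hn.
    unfold Rdist. specialize (HM n Hn x). lra. }
  exists (F, G). split.
  - split; [apply (cont_on_v_uniform_limit (fun n => snd (u n))); auto; intros; apply Hu|].
    apply (J1_limit_remainder u); auto.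
  - intros eps Heps. destruct (HF (eps/4)) as [M1 HM1]; [lra|].
    destruct (HG (eps/4)) as [M2 HM2]; [lra|]. exists (Nat.max M1 M2). intros n Hn.
    unfold J1norm, jsub, jadd, jscal; simpl.
    assert (supnorm (fun x => fst (u n) x + -1 * F x) <= eps/4).
    { apply supnorm_le; [lra|]. intros x.
      replace (fst (u n) x + -1 * F x) with (fst (u n) x - F x) by ring. apply HM1; lia. }
    assert (supnormv (fun x => vadd (snd (u n) x) (vscal (-1) (G x))) <= eps/4).
    { apply supnormv_le; [lra|]. intros x. apply (HM2 n ltac:(lia) x). }
    lra.
Qed.

End Conditions.

Theorem mainTheorem7 (d : nat) (K : Rd d -> Prop) (HK : compact_Rd K) :
  (J1_Banach K <-> C1_Banach K) /\ (C1_Banach K <-> cond_c K).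
Proof.
  rewrite (J1_Banach_iff HK).
  pose proof (C1_Banach_cond_c HK) as Hbc.
  pose proof (cond_c_J1_complete HK) as Hca.
  pose proof (J1_complete_C1_complete HK) as Hab.
  rewrite (C1_Banach_iff HK) in *.
  tauto.
Qed.
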